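(* Let $(U,d)$ be an asymmetric pseudometric space, $k\ge 2$, $R^*>0$ the optimal AMMD value, $R'=\min\{d(u,v): d(u,v)\ge R^*/3,\ u,v\in U,\ u\ne v\}$, $R>0$, and let $U'$ be the output of Cluster$(U,d,R)$. Then $d_{\max}(u,v)\ge R$ for all distinct $u,v\in U'$. Additionally, if $R\le R'$, then $U'$ contains a set $S$ with $|S|=k$ and $\operatorname{div}(S)\ge R'\ge R^*/3$.
   Context: An asymmetric pseudometric space $(U,d)$ is a finite set $U$ with $d:U\times U\to\mathbb{R}_{\ge 0}$ such that $d(u,u)=0$ and $d(u,v)\le d(u,w)+d(w,v)$ for all $u,v,w\in U$ ($d$ need not be symmetric). For $S\subseteq U$, $\operatorname{div}(S)=\min_{u,v\in S,\,u\ne v} d(u,v)$; $R^*$ is the maximum of $\operatorname{div}(O)$ over $O\subseteq U$ with $|O|=k$ (with $k\le |U|$). $d_{\max}(u,v)=\max\{d(u,v),d(v,u)\}$. Cluster$(U,d,R)$: initially all points are unmarked; while an unmarked point exists, choose any unmarked point $c$, let $A=\{v\in U\text{ unmarked}: d_{\max}(c,v)<R\}$, mark all points of $A$, and add $c$ to the output set $U'$. It returns $U'$. *)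

From HB Require Import structures.
From mathcomp Require Import all_boot all_order all_algebra.
Set Implicit Arguments. Unset Strict Implicit. Unset Printing Implicit Defensive.
Import Order.TTheory GRing.Theory Num.Theory.
Local Open Scope ring_scope.

Section Defs.
Variables (R : realFieldType) (U : finType).

Definition is_apm (d : U -> U -> R) : Prop :=
  [/\ forall u v, 0 <= d u v,
      forall u, d u u = 0 &
      forall u v w, d u v <= d u w + d w v].

Definition dmax (d : U -> U -> R) (u v : U) : R := Num.max (d u v) (d v u).

(* minimum of a finite list of reals; 0 on the empty list (never used on
   empty lists in the statement) *)
Definition seqmin (s : seq R) : R :=
  if s is x :: s' then foldr Num.min x s' else 0.

Definition div (d : U -> U -> R) (S : {set U}) : R :=
  seqmin [seq d p.1 p.2 | p <- enum (fun p : U * U =>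
            [&& p.1 \in S, p.2 \in S & p.1 != p.2])].

(* R^* = max_{|O| = k} div(O)  (div is nonnegative, so 0 is a valid seed) *)
Definition Rstar (d : U -> U -> R) (k : nat) : R :=
  \big[Num.max/0]_(O : {set U} | #|O| == k) div d O.

Definition Rprime (d : U -> U -> R) (k : nat) : R :=
  seqmin [seq d p.1 p.2 | p <- enum (fun p : U * U =>
            (p.1 != p.2) && (Rstar d k / 3%:R <= d p.1 p.2))].

(* Cluster(U,d,r): states are (marked, output). One iteration picks any
   unmarked c, marks A = {v unmarked : dmax c v < r}, and adds c to output. *)
Definition cluster_step (d : U -> U -> R) (r : R)
    (s s' : {set U} * {set U}) : Prop :=
  exists c, c \notin s.1 /\
    s' = (s.1 :|: [set v | (v \notin s.1) && (dmax d c v < r)], c |: s.2).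

Inductive cluster_run (d : U -> U -> R) (r : R) :
    {set U} * {set U} -> {set U} -> Prop :=
  | cluster_done (marked out : {set U}) :
      marked = [set: U] -> cluster_run d r (marked, out) out
  | cluster_next (s s' : {set U} * {set U}) (out : {set U}) :
      cluster_step d r s s' -> cluster_run d r s' out -> cluster_run d r s out.

Definition cluster_output (d : U -> U -> R) (r : R) (U' : {set U}) : Prop :=
  cluster_run d r (set0, set0) U'.

End Defs.

From HB Require Import structures.
From mathcomp Require Import all_boot all_order all_algebra.
From mathcomp Require Import lra.
Import Order.TTheory GRing.Theory Num.Theory.
Local Open Scope ring_scope.

(* Cluster(U,d,R) returns a set U' that is R-separated for d_max and covers U:
   every point lies at d_max-distance < R from some centre.  Let O be an
   optimal k-set, so d(a,b) >= R^* for distinct a, b in O, and send each a in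
   O to a centre f(a) with d_max(f a, a) < R <= R'.  By definition of R', a
   distance below R' is below R^*/3, so the triangle inequality
   d(a,b) <= d(a,f a) + d(f a,f b) + d(f b,b) gives d(f a,f b) > R^*/3, hence
   d(f a,f b) >= R'.  In particular f is injective on O and f(O) is the
   required k-subset of U'. *)

Set Implicit Arguments.
Unset Strict Implicit.

Section Diversity.
Variables (R : realFieldType) (U : finType) (d : U -> U -> R).

Lemma seqmin_le (s : seq R) x : x \in s -> seqmin s <= x.
Proof.
case: s => [//|y s] /=; elim: s x y => [|z s IH] x y /=.
  by rewrite inE => /eqP ->.
rewrite ge_min !inE => /or3P[/eqP->|/eqP->|xs].
- by rewrite IH ?orbT // inE eqxx.
- by rewrite lexx.
- by rewrite IH ?orbT // inE xs orbT.
Qed.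

Lemma le_seqmin (s : seq R) a y :
  y \in s -> (forall x, x \in s -> a <= x) -> a <= seqmin s.
Proof.
case: s => [//|z s] _ /=; elim: s z => [|w s IH] z /= lb_s.
  by rewrite lb_s ?inE.
rewrite le_min lb_s ?inE ?eqxx ?orbT //=.
by apply: IH => x; rewrite inE => /predU1P[->|xs]; rewrite lb_s // !inE ?eqxx ?xs ?orbT.
Qed.

Lemma div_le (S : {set U}) u v : u \in S -> v \in S -> u != v -> div d S <= d u v.
Proof.
move=> uS vS uv; apply: seqmin_le; apply/mapP.
by exists (u, v); rewrite // mem_enum unfold_in /= uS vS uv.
Qed.

Lemma le_div (S : {set U}) a : (1 < #|S|)%N ->
  (forall u v, u \in S -> v \in S -> u != v -> a <= d u v) -> a <= div d S.
Proof.
move=> /card_gt1P[u0 [v0 [u0S v0S uv0]]] lb_S.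
apply: (@le_seqmin _ _ (d u0 v0)) => [|x /mapP[[u v]]].
  by apply/mapP; exists (u0, v0); rewrite // mem_enum unfold_in /= u0S v0S uv0.
by rewrite mem_enum unfold_in /= => /and3P[uS vS uv] ->; apply: lb_S.
Qed.

Lemma Rstar_attained k :
  0 < Rstar d k -> exists2 O : {set U}, #|O| = k & Rstar d k = div d O.
Proof.
rewrite /Rstar; set M := \big[_/_]_(_ | _) _.
have : M = 0 \/ exists2 O : {set U}, #|O| = k & M = div d O.
  apply: (big_ind (fun x => x = 0 \/ exists2 O : {set U}, #|O| = k & x = div d O)).
  - by left.
  - by move=> x y x_ok y_ok; case: leP => _.
  - by move=> O /eqP card_O; right; exists O.
by case=> [->|//]; rewrite ltxx.
Qed.

Lemma Rprime_le k u v : u != v -> Rstar d k / 3%:R <= d u v -> Rprime d k <= d u v.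
Proof.
move=> uv large_uv; apply: seqmin_le; apply/mapP.
by exists (u, v); rewrite // mem_enum unfold_in /= uv.
Qed.

Lemma Rstar_third_le_Rprime k u v :
  u != v -> Rstar d k / 3%:R <= d u v -> Rstar d k / 3%:R <= Rprime d k.
Proof.
move=> uv large_uv; apply: (@le_seqmin _ _ (d u v)) => [|x /mapP[[a b]]].
  by apply/mapP; exists (u, v); rewrite // mem_enum unfold_in /= uv.
by rewrite mem_enum unfold_in /= => /andP[_ ?] ->.
Qed.

Lemma le_dmaxl u v : d u v <= dmax d u v.
Proof. by rewrite le_max lexx. Qed.

Lemma le_dmaxr u v : d v u <= dmax d u v.
Proof. by rewrite le_max lexx orbT. Qed.

Hypothesis d_apm : is_apm d.

Lemma dmax_lt_Rprime k u v : 0 < Rstar d k -> dmax d u v < Rprime d k ->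
  d u v < Rstar d k / 3%:R /\ d v u < Rstar d k / 3%:R.
Proof.
case: d_apm => _ d_refl _ Rstar_gt0 close_uv.
have third_gt0 : 0 < Rstar d k / 3%:R by rewrite divr_gt0 ?ltr0n.
have [<-|uv] := eqVneq u v; first by rewrite d_refl.
have below a b : a != b -> d a b <= dmax d u v -> d a b < Rstar d k / 3%:R.
  move=> ab le_ab; rewrite ltNge; apply/negP => /(Rprime_le ab).
  by apply/negP; rewrite -ltNge (le_lt_trans le_ab).
by rewrite !below ?le_dmaxl ?le_dmaxr // eq_sym.
Qed.

Lemma far_neighbours (x : R) a b a' b' :
  3%:R * x <= d a b -> d a a' < x -> d b' b < x -> x < d a' b'.
Proof.
case: d_apm => _ _ d_tri far_ab near_a near_b.
have := d_tri a b a'; have := d_tri a' b b'; lra.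
Qed.

Lemma spread_image (O : {set U}) (f : U -> U) (x : R) :
  (forall a b, a \in O -> b \in O -> a != b -> 3%:R * x <= d a b) ->
  (forall a, d a (f a) < x /\ d (f a) a < x) ->
  #|f @: O| = #|O| /\
  (forall u v, u \in f @: O -> v \in f @: O -> u != v -> x < d u v).
Proof.
case: d_apm => d_ge0 d_refl _ far_O near_f.
have far_f a b : a \in O -> b \in O -> a != b -> x < d (f a) (f b).
  move=> aO bO ab; apply: (far_neighbours (far_O a b aO bO ab)).
  - by case: (near_f a).
  - by case: (near_f b).
split.
  apply: card_in_imset => a b aO bO fab; have [//|ab] := eqVneq a b.
  have [/(le_lt_trans (d_ge0 _ _)) x_gt0 _] := near_f a.
  by have := far_f a b aO bO ab; rewrite fab d_refl => /(lt_trans x_gt0); rewrite ltxx.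
move=> _ _ /imsetP[a aO ->] /imsetP[b bO ->] fab.
by apply: far_f => //; apply: contraNneq fab => ->.
Qed.

End Diversity.

Section Cluster.
Variables (R : realFieldType) (U : finType) (d : U -> U -> R) (r : R).

(* The last clause keeps the output separated: a new centre is unmarked, hence
   at d_max-distance >= r from every earlier centre. *)
Definition cluster_inv (s : {set U} * {set U}) : Prop :=
  [/\ forall v, v \in s.1 -> exists2 c, c \in s.2 & dmax d c v < r,
      forall u v, u \in s.2 -> v \in s.2 -> u != v -> r <= dmax d u v &
      forall c v, c \in s.2 -> v \notin s.1 -> r <= dmax d c v].

Lemma cluster_run_inv s out : cluster_run d r s out -> cluster_inv s ->
  (forall v, exists2 c, c \in out & dmax d c v < r) /\
  (forall u v, u \in out -> v \in out -> u != v -> r <= dmax d u v).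
Proof.
elim=> {s out} [marked out -> | s s' out [c [c_unmarked ->]] _ IH] [cov sep far].
  by split=> // v; apply: cov; rewrite inE.
have dmaxC u v : dmax d u v = dmax d v u by rewrite /dmax maxC.
apply: IH; split=> /=.
- move=> v; rewrite !inE => /orP[/cov[c' c'_out near_v]|/andP[_ near_v]].
    by exists c'; rewrite // !inE c'_out orbT.
  by exists c; rewrite // !inE eqxx.
- move=> u v; rewrite !inE => /predU1P[->|uo] /predU1P[->|vo] uv.
  + by rewrite eqxx in uv.
  + by rewrite dmaxC far.
  + exact: far.
  + exact: sep.
- move=> c' v; rewrite !inE negb_or => /predU1P[->|c'o] /andP[v_unmarked].
    by rewrite v_unmarked -leNgt.
  by move=> _; apply: far.
Qed.

Lemma cluster_output_spec U' : cluster_output d r U' ->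
  (forall v, exists2 c, c \in U' & dmax d c v < r) /\
  (forall u v, u \in U' -> v \in U' -> u != v -> r <= dmax d u v).
Proof. by move/cluster_run_inv; apply; split=> [v|u v|c v]; rewrite ?inE. Qed.

End Cluster.

Theorem corollary5p3 (R : realFieldType) (U : finType) (d : U -> U -> R)
    (k : nat) (r : R) (U' : {set U}) :
  is_apm d -> (2 <= k)%N -> (k <= #|U|)%N ->
  0 < Rstar d k -> 0 < r -> cluster_output d r U' ->
  (forall u v, u \in U' -> v \in U' -> u != v -> r <= dmax d u v) /\
  (r <= Rprime d k ->
     exists S : {set U}, [/\ S \subset U', #|S| = k,
       Rprime d k <= div d S & Rstar d k / 3%:R <= Rprime d k]).
Proof.
move=> d_apm k_ge2 _ Rstar_gt0 _ /cluster_output_spec[cover sep].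
split=> // r_le_Rprime; set x := Rstar d k / 3%:R.
have [O card_O Rstar_O] := Rstar_attained Rstar_gt0.
have far_O a b : a \in O -> b \in O -> a != b -> 3%:R * x <= d a b.
  by move=> aO bO ab; rewrite mulrC divfK ?pnatr_eq0 // Rstar_O div_le.
have [f f_in near_f] := fin_all_exists2 cover.
have [|card_fO far_fO] := spread_image d_apm far_O (f := f) (x := x).
  move=> a; have [] := dmax_lt_Rprime d_apm Rstar_gt0 (lt_le_trans (near_f a) r_le_Rprime).
  by split.
have x_le_Rprime : x <= Rprime d k.
  have /card_gt1P[a [b [aO bO ab]]] : (1 < #|O|)%N by rewrite card_O.
  apply: (Rstar_third_le_Rprime ab); apply: le_trans (far_O a b aO bO ab).
  by rewrite ler_peMl ?ler1n // divr_ge0 ?ltW.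
exists (f @: O); split=> //.
- by apply/subsetP => _ /imsetP[a _ ->]; apply: f_in.
- by rewrite card_fO.
- apply: le_div => [|u v uS vS uv]; first by rewrite card_fO card_O.
  by apply/Rprime_le/ltW/far_fO.
Qed.
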